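(* For all integers $i,j,m\ge0$, $$\overline{\mathfrak{C}}_{ijm}=\frac{(i+j-m+2)(i-j+m+2)(-i+j+m+2)(i+j+m+6)}{4\sqrt{2\pi(i+1)(i+3)(j+1)(j+3)(m+1)(m+3)}}\cdot\mathbf{1}(|j-m|\le i\le j+m)\,\mathbf{1}(|i-m|\le j\le i+m)\,\mathbf{1}(|i-j|\le m\le i+j)$$ $$\cdot\,\mathbf{1}(j+m-i\in2\mathbb{N}\cup\{0\})\,\mathbf{1}(i+m-j\in2\mathbb{N}\cup\{0\})\,\mathbf{1}(i+j-m\in2\mathbb{N}\cup\{0\}).$$
   Context: $\mathfrak{e}_n(x)=\mathfrak{N}_nP_n^{(3/2,3/2)}(\cos x)$ with $P_n^{(3/2,3/2)}$ the Jacobi polynomial, $\omega_n=n+2$ and $\mathfrak{N}_n=\frac{\sqrt{\omega_n\Gamma(1+n)\Gamma(4+n)}}{2\sqrt2\,\Gamma(5/2+n)}$. $\overline{\mathfrak{C}}_{ijm}=\int_0^\pi\mathfrak{e}_i\mathfrak{e}_j\mathfrak{e}_m\sin^4x\,dx$. $\mathbf{1}(\cdot)$ is the indicator of the condition. *)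

From Stdlib Require Import Reals ZArith Bool.
From Coquelicot Require Import Coquelicot.
Open Scope R_scope.

Fixpoint poch (a : R) (k : nat) : R :=
  match k with
  | O => 1
  | S k' => poch a k' * (a + INR k')
  end.

(* Jacobi polynomial P_n^{(a,b)}(x), standard explicit formula
   P_n^{(a,b)}(x) = 1/n! * sum_{k=0}^n C(n,k) (a+k+1)_{n-k} (a+b+n+1)_k ((x-1)/2)^k,
   equivalently Gamma(a+n+1)/(n! Gamma(a+b+n+1)) sum_k C(n,k) Gamma(a+b+n+k+1)/Gamma(a+k+1) ((x-1)/2)^k. *)
Definition jacobiP (a b : R) (n : nat) (x : R) : R :=
  / INR (fact n) *
  sum_f_R0 (fun k => Binomial.C n k * poch (a + INR k + 1) (n - k)
                     * poch (a + b + INR n + 1) k * ((x - 1) / 2) ^ k) n.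

(* Gamma at half-integers: gamma_half n = Gamma(n + 1/2),
   using Gamma(1/2) = sqrt(pi) and Gamma(s+1) = s Gamma(s). *)
Fixpoint gamma_half (n : nat) : R :=
  match n with
  | O => sqrt PI
  | S k => (INR k + / 2) * gamma_half k
  end.

Definition omega (n : nat) : R := INR n + 2.

(* N_n = sqrt(omega_n Gamma(1+n) Gamma(4+n)) / (2 sqrt 2 Gamma(5/2+n)),
   with Gamma(1+n) = n!, Gamma(4+n) = (n+3)!, Gamma(5/2+n) = gamma_half (n+2). *)
Definition normN (n : nat) : R :=
  sqrt (omega n * INR (fact n) * INR (fact (n + 3)))
  / (2 * sqrt 2 * gamma_half (n + 2)).

Definition eb (n : nat) (x : R) : R :=
  normN n * jacobiP (3/2) (3/2) n (cos x).

Definition Cbar (i j m : nat) : R :=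
  RInt (fun x => eb i x * eb j x * eb m x * (sin x) ^ 4) 0 PI.

Definition indic (b : bool) : R := if b then 1 else 0.

Definition even_nonneg (z : Z) : bool := (0 <=? z)%Z && Z.even z.

(* Put t = cos x.  The Jacobi polynomial P_n^(3/2,3/2) is a constant multiple of the Gegenbauer
   polynomial C_n^(2): the hypergeometric coefficients of the former satisfy the three-term
   recurrence of the latter.  For T(i,j,m) = int_0^pi C_i C_j C_m sin^4, substituting the
   recurrence into C_(m+1) and into t C_i gives a recurrence that determines T from its values
   at m = 0, and T(i,j,0) = T(i,0,j) reduces these to T(i,0,0).  That one is an explicit
   trigonometric integral, because sin^3 x C_n^(2)(cos x) is a combination of sin and cos of
   (n+2)x times sin x and cos x.  The claimed closed form satisfies the same recurrence and
   initial values, which is a finite case check over Z on the admissibility conditions.  What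
   remains is to multiply the normalising constants together. *)

From Stdlib Require Import Reals ZArith Bool Lia Lra.
From Coquelicot Require Import Coquelicot.
Open Scope R_scope.

(* Equalities coming out of Coquelicot live at a canonical structure such as [R_AbsRing];
   [ring] and [field] recognise them only once restated at [R]. *)
Ltac eq_at_R := match goal with |- @eq _ ?a ?b => change (@eq R a b) end.

(* [pred_term f n] is [f (n - 1)], read as [0] at [n = 0]: the convention [C_(-1) = 0] of the
   three-term recurrences below. *)
Definition pred_term (f : nat -> R) (n : nat) : R :=
  match n with O => 0 | S k => f k end.

Lemma RInt_pred_term (f : nat -> R -> R) n a b :
  RInt (fun x => pred_term (fun k => f k x) n) a b = pred_term (fun k => RInt (f k) a b) n.
Proof.
  destruct n as [|n]; [|reflexivity].
  simpl. rewrite RInt_const. apply Rmult_0_r.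
Qed.

Lemma is_RInt_scal_R (f : R -> R) a b c :
  ex_RInt f a b -> is_RInt (fun x => c * f x) a b (c * RInt f a b).
Proof.
  intros Hf.
  exact (is_RInt_scal f a b c _ (RInt_correct (V := R_CompleteNormedModule) f a b Hf)).
Qed.

Lemma ex_RInt_pred_term (f : nat -> R -> R) n a b :
  (forall k, ex_RInt (f k) a b) -> ex_RInt (fun x => pred_term (fun k => f k x) n) a b.
Proof.
  intros Hf. destruct n; [apply (ex_RInt_const (V := R_CompleteNormedModule) _ _ 0)|apply Hf].
Qed.

Fixpoint gegen2 (n : nat) (t : R) : R :=
  match n with
  | O => 1
  | S O => 4 * t
  | S (S k as n') =>
      (2 * (INR k + 3) * t * gegen2 n' t - (INR k + 4) * gegen2 k t) / (INR k + 2)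
  end.

Lemma gegen2_SS n t :
  gegen2 (S (S n)) t =
  (2 * (INR n + 3) * t * gegen2 (S n) t - (INR n + 4) * gegen2 n t) / (INR n + 2).
Proof. reflexivity. Qed.

Lemma gegen2_rec n t :
  (INR n + 1) * gegen2 (S n) t + (INR n + 3) * pred_term (fun k => gegen2 k t) n
  = 2 * (INR n + 2) * t * gegen2 n t.
Proof.
  destruct n as [|n]; cbn [pred_term].
  - simpl. ring.
  - rewrite gegen2_SS, S_INR. pose proof (pos_INR n). field. lra.
Qed.

Lemma continuous_gegen2 n t : continuous (gegen2 n) t.
Proof.
  revert t. induction n as [n IH] using (well_founded_induction lt_wf). intros t.
  destruct n as [|[|n]].
  - apply continuous_const.
  - apply (continuous_mult (fun _ => 4) (fun y => y)); [apply continuous_const|apply continuous_id].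
  - change (gegen2 (S (S n))) with
      (fun t => (2 * (INR n + 3) * t * gegen2 (S n) t - (INR n + 4) * gegen2 n t) / (INR n + 2)).
    apply (continuous_mult _ (fun _ => / (INR n + 2))); [|apply continuous_const].
    apply (continuous_minus (fun t => 2 * (INR n + 3) * t * gegen2 (S n) t)
                            (fun t => (INR n + 4) * gegen2 n t)).
    + apply (continuous_mult (fun t => 2 * (INR n + 3) * t)); [|apply IH; lia].
      apply (continuous_mult (fun _ => 2 * (INR n + 3)) (fun t => t));
        [apply continuous_const|apply continuous_id].
    + apply (continuous_mult (fun _ => INR n + 4)); [apply continuous_const|apply IH; lia].
Qed.

Lemma sin_cube_gegen2 n x :
  sin x ^ 3 * gegen2 n (cos x) =
  (sin ((INR n + 2) * x) * cos x - (INR n + 2) * cos ((INR n + 2) * x) * sin x) / 2.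
Proof.
  enough (H : forall n, sin x ^ 3 * gegen2 n (cos x) =
    (sin ((INR n + 2) * x) * cos x - (INR n + 2) * cos ((INR n + 2) * x) * sin x) / 2
    /\ sin x ^ 3 * gegen2 (S n) (cos x) =
    (sin ((INR (S n) + 2) * x) * cos x
     - (INR (S n) + 2) * cos ((INR (S n) + 2) * x) * sin x) / 2)
    by apply H.
  clear n. induction n as [|n [IH1 IH2]].
  - simpl. replace ((0 + 2) * x) with (x + x) by ring.
    replace ((1 + 2) * x) with (x + x + x) by ring.
    repeat (rewrite sin_plus || rewrite cos_plus). split; field.
  - split; [exact IH2|].
    pose proof (pos_INR n).
    rewrite gegen2_SS.
    replace (sin x ^ 3 * ((2 * (INR n + 3) * cos x * gegen2 (S n) (cos x)
                           - (INR n + 4) * gegen2 n (cos x)) / (INR n + 2)))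
      with ((2 * (INR n + 3) * cos x * (sin x ^ 3 * gegen2 (S n) (cos x))
             - (INR n + 4) * (sin x ^ 3 * gegen2 n (cos x))) / (INR n + 2)) by (field; lra).
    rewrite IH1, IH2, !S_INR.
    set (y := (INR n + 3) * x).
    replace ((INR n + 2) * x) with (y - x) by (unfold y; ring).
    replace ((INR n + 1 + 2) * x) with y by (unfold y; ring).
    replace ((INR n + 1 + 1 + 2) * x) with (y + x) by (unfold y; ring).
    rewrite sin_plus, cos_plus, sin_minus, cos_minus.
    field. lra.
Qed.

(* For [n = 0] the term [sin (n x) / n] is replaced by its limit [x]. *)
Definition gegen2_sin4_primitive (n : nat) (x : R) : R :=
  match n with
  | O => (- (sin x ^ 2 * sin (2 * x)) + 3 / 4 * (x - sin (4 * x) / 4)) / 2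
  | S _ => (- (sin x ^ 2 * sin ((INR n + 2) * x))
            + 3 / 4 * (sin (INR n * x) / INR n - sin ((INR n + 4) * x) / (INR n + 4))) / 2
  end.

Lemma is_derive_gegen2_sin4_primitive n x :
  is_derive (gegen2_sin4_primitive n) x (gegen2 n (cos x) * sin x ^ 4).
Proof.
  destruct n as [|n]; unfold gegen2_sin4_primitive.
  - auto_derive; [auto|].
    replace (4 * x) with (x + x + (x + x)) by ring. replace (2 * x) with (x + x) by ring.
    repeat (rewrite sin_plus || rewrite cos_plus).
    assert (Hc : cos x ^ 2 = 1 - sin x ^ 2) by (rewrite <- (sin2_cos2 x); unfold Rsqr; ring).
    simpl gegen2. eq_at_R. ring_simplify.
    replace (cos x ^ 4) with ((cos x ^ 2) ^ 2) by ring. rewrite Hc. field.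
  - replace (gegen2 (S n) (cos x) * sin x ^ 4)
      with (sin x * (sin x ^ 3 * gegen2 (S n) (cos x))) by ring.
    rewrite sin_cube_gegen2.
    assert (Hr : 0 < INR (S n)) by (apply lt_0_INR; lia).
    revert Hr. generalize (INR (S n)). intros r Hr.
    auto_derive; [repeat split; lra|].
    set (y := (r + 2) * x).
    replace (r * x) with (y - (x + x)) by (unfold y; ring).
    replace ((r + 4) * x) with (y + (x + x)) by (unfold y; ring).
    rewrite cos_minus. repeat (rewrite sin_plus || rewrite cos_plus).
    field_simplify; [field|lra..].
Qed.

Lemma sin_INR_mult_PI k : sin (INR k * PI) = 0.
Proof. apply sin_eq_0_1. exists (Z.of_nat k). now rewrite INR_IZR_INZ. Qed.

Lemma continuous_comp_cos (f : R -> R) x :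
  (forall t, continuous f t) -> continuous (fun y => f (cos y)) x.
Proof.
  intros Hf. apply (continuous_comp cos f); [|apply Hf].
  apply (@ex_derive_continuous R_AbsRing R_NormedModule cos). auto_derive. auto.
Qed.

Lemma RInt_gegen2_sin4 n :
  RInt (fun x => gegen2 n (cos x) * sin x ^ 4) 0 PI = if (n =? 0)%nat then 3 * PI / 8 else 0.
Proof.
  rewrite (is_RInt_unique _ 0 PI
             (minus (gegen2_sin4_primitive n PI) (gegen2_sin4_primitive n 0))).
  2:{ apply (is_RInt_derive (gegen2_sin4_primitive n));
        [intros x _; apply is_derive_gegen2_sin4_primitive|].
      intros x _. apply (continuous_mult (fun y => gegen2 n (cos y)) (fun y => sin y ^ 4)).
      - apply continuous_comp_cos, continuous_gegen2.
      - apply (@ex_derive_continuous R_AbsRing R_NormedModule (fun y => sin y ^ 4)).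
        auto_derive. auto. }
  unfold minus, plus, opp; simpl. eq_at_R.
  destruct n as [|n]; unfold gegen2_sin4_primitive; rewrite sin_0, sin_PI, !Rmult_0_r, !sin_0.
  - replace (2 * PI) with (INR 2 * PI) by (simpl; ring).
    replace (4 * PI) with (INR 4 * PI) by (simpl; ring).
    rewrite !sin_INR_mult_PI. simpl. field.
  - replace ((INR (S n) + 2) * PI) with (INR (S n + 2) * PI) by (rewrite plus_INR; simpl; ring).
    replace ((INR (S n) + 4) * PI) with (INR (S n + 4) * PI) by (rewrite plus_INR; simpl; ring).
    rewrite !sin_INR_mult_PI. change (if (S n =? 0)%nat then 3 * PI / 8 else 0) with 0.
    unfold Rdiv. ring.
Qed.

Definition triple_integrand (i j m : nat) (x : R) : R :=
  gegen2 i (cos x) * gegen2 j (cos x) * gegen2 m (cos x) * sin x ^ 4.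

Definition gegen2_triple (i j m : nat) : R := RInt (triple_integrand i j m) 0 PI.

Lemma ex_RInt_triple_integrand i j m a b : ex_RInt (triple_integrand i j m) a b.
Proof.
  apply (@ex_RInt_continuous R_CompleteNormedModule). intros x _. unfold triple_integrand.
  apply (continuous_mult (fun x => _ * _ * _) (fun x => sin x ^ 4)).
  - apply (continuous_mult (fun x => _ * _) (fun x => gegen2 m (cos x))).
    + apply (continuous_mult (fun x => gegen2 i (cos x)) (fun x => gegen2 j (cos x)));
        apply continuous_comp_cos, continuous_gegen2.
    + apply continuous_comp_cos, continuous_gegen2.
  - apply (@ex_derive_continuous R_AbsRing R_NormedModule (fun y => sin y ^ 4)). auto_derive. auto.
Qed.

Lemma triple_integrand_rec i j m x :
  (INR m + 1) * (INR i + 2) * triple_integrand i j (S m) x =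
  (INR m + 2) * (INR i + 1) * triple_integrand (S i) j m x
  + (INR m + 2) * (INR i + 3) * pred_term (fun k => triple_integrand k j m x) i
  - (INR i + 2) * (INR m + 3) * pred_term (fun k => triple_integrand i j k x) m.
Proof.
  unfold triple_integrand.
  set (t := cos x). set (s4 := sin x ^ 4).
  assert (Hi := gegen2_rec i t). assert (Hm := gegen2_rec m t).
  apply (f_equal (fun y => (INR i + 2) * gegen2 i t * gegen2 j t * s4 * y)) in Hm.
  apply (f_equal (fun y => (INR m + 2) * gegen2 j t * gegen2 m t * s4 * y)) in Hi.
  destruct i as [|i], m as [|m]; cbn [pred_term] in *; lra.
Qed.

Definition triple_recursion (U : nat -> nat -> R) : Prop :=
  forall i m,
  (INR m + 1) * (INR i + 2) * U i (S m) =
  (INR m + 2) * (INR i + 1) * U (S i) m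
  + (INR m + 2) * (INR i + 3) * pred_term (fun k => U k m) i
  - (INR i + 2) * (INR m + 3) * pred_term (U i) m.

Lemma triple_recursion_unique (U V : nat -> nat -> R) :
  triple_recursion U -> triple_recursion V -> (forall i, U i O = V i O) ->
  forall i m, U i m = V i m.
Proof.
  intros HU HV H0.
  enough (H : forall m, (forall i, U i m = V i m) /\ (forall i, U i (S m) = V i (S m)))
    by (intros i m; apply H).
  assert (step : forall m, (forall i, U i m = V i m) ->
                 (forall i, pred_term (U i) m = pred_term (V i) m) ->
                 forall i, U i (S m) = V i (S m)).
  { intros m Hm Hpm i.
    assert (Hpi : pred_term (fun k => U k m) i = pred_term (fun k => V k m) i)
      by (destruct i; cbn [pred_term]; auto).
    apply Rmult_eq_reg_l with ((INR m + 1) * (INR i + 2)).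
    - rewrite HU, HV, Hm, Hpm, Hpi. reflexivity.
    - pose proof (pos_INR m); pose proof (pos_INR i). nra. }
  induction m as [|m [IH1 IH2]].
  - split; [exact H0|]. apply step; [exact H0|reflexivity].
  - split; [exact IH2|]. apply step; [exact IH2|exact IH1].
Qed.

Lemma gegen2_triple_recursion j : triple_recursion (fun i m => gegen2_triple i j m).
Proof.
  intros i m. unfold gegen2_triple.
  rewrite <- (RInt_pred_term (fun k => triple_integrand k j m) i),
          <- (RInt_pred_term (fun k => triple_integrand i j k) m).
  transitivity (RInt (fun x =>
           (INR m + 2) * (INR i + 1) * triple_integrand (S i) j m x
           + (INR m + 2) * (INR i + 3) * pred_term (fun k => triple_integrand k j m x) i
           - (INR i + 2) * (INR m + 3) * pred_term (fun k => triple_integrand i j k x) m) 0 PI).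
  - symmetry. apply is_RInt_unique.
    apply (is_RInt_ext (fun x => (INR m + 1) * (INR i + 2) * triple_integrand i j (S m) x)).
    { intros x _. apply triple_integrand_rec. }
    apply is_RInt_scal_R, ex_RInt_triple_integrand.
  - set (f1 := triple_integrand (S i) j m).
    set (f2 := fun x => pred_term (fun k => triple_integrand k j m x) i).
    set (f3 := fun x => pred_term (fun k => triple_integrand i j k x) m).
    assert (H1 : ex_RInt f1 0 PI) by apply ex_RInt_triple_integrand.
    assert (H2 : ex_RInt f2 0 PI)
      by (apply ex_RInt_pred_term; intros; apply ex_RInt_triple_integrand).
    assert (H3 : ex_RInt f3 0 PI)
      by (apply ex_RInt_pred_term; intros; apply ex_RInt_triple_integrand).
    apply is_RInt_unique.
    apply (is_RInt_minus (fun x => _ * f1 x + _ * f2 x) (fun x => _ * f3 x)).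
    + apply (is_RInt_plus (fun x => _ * f1 x) (fun x => _ * f2 x));
        apply is_RInt_scal_R; assumption.
    + apply is_RInt_scal_R; assumption.
Qed.

Section TripleValue.
Local Open Scope Z_scope.

Definition triple_admissible (i j m : Z) : bool :=
  (0 <=? j + m - i) && (0 <=? i + m - j) && (0 <=? i + j - m) && Z.even (i + j + m).

Definition triple_poly (i j m : Z) : Z :=
  (i + j - m + 2) * (i - j + m + 2) * (- i + j + m + 2) * (i + j + m + 6).

Definition triple_valueZ (i j m : Z) : Z :=
  if triple_admissible i j m then triple_poly i j m else 0.

Lemma triple_admissibleP i j m :
  reflect (0 <= j + m - i /\ 0 <= i + m - j /\ 0 <= i + j - m /\ (i + j + m) mod 2 = 0)
          (triple_admissible i j m).
Proof.
  apply iff_reflect. unfold triple_admissible.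
  rewrite !andb_true_iff, !Z.leb_le, Zeven_mod, Z.eqb_eq. tauto.
Qed.

Lemma triple_valueZ_rec i j m : 0 <= i -> 0 <= j -> 0 <= m ->
  (m + 1) * (i + 2) * triple_valueZ i j (m + 1) =
  (m + 2) * (i + 1) * triple_valueZ (i + 1) j m
  + (m + 2) * (i + 3) * triple_valueZ (i - 1) j m
  - (i + 2) * (m + 3) * triple_valueZ i j (m - 1).
Proof.
  intros Hi Hj Hm. unfold triple_valueZ.
  destruct (triple_admissibleP i j (m + 1)), (triple_admissibleP (i + 1) j m),
           (triple_admissibleP (i - 1) j m), (triple_admissibleP i j (m - 1));
  unfold triple_poly; Z.div_mod_to_equations;
  (* on the boundary of the admissible region a vanishing linear factor kills the missing term *)
  first [ exfalso; lia | ring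
        | (assert (m = i + j + 1) by lia; subst m; ring)
        | (assert (j = i + m + 1) by lia; subst j; ring)
        | (assert (i = j + m + 1) by lia; subst i; ring) ].
Qed.

Lemma triple_valueZ_swap i j m : triple_valueZ i j m = triple_valueZ i m j.
Proof.
  unfold triple_valueZ.
  destruct (triple_admissibleP i j m), (triple_admissibleP i m j);
  unfold triple_poly; Z.div_mod_to_equations; first [exfalso; lia | ring].
Qed.

Lemma triple_valueZ_neg i j m : i < 0 \/ m < 0 -> triple_valueZ i j m = 0.
Proof.
  intros Hneg. unfold triple_valueZ.
  destruct (triple_admissibleP i j m); [lia|reflexivity].
Qed.

End TripleValue.

Definition gegen2_triple_value (i j m : nat) : R :=
  PI / 128 * IZR (triple_valueZ (Z.of_nat i) (Z.of_nat j) (Z.of_nat m)).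

Lemma pred_term_triple_value_l i j m :
  pred_term (fun k => gegen2_triple_value k j m) i
  = PI / 128 * IZR (triple_valueZ (Z.of_nat i - 1) (Z.of_nat j) (Z.of_nat m)).
Proof.
  destruct i as [|i]; cbn [pred_term].
  - rewrite triple_valueZ_neg by lia. simpl. ring.
  - unfold gegen2_triple_value. do 3 f_equal. lia.
Qed.

Lemma pred_term_triple_value_r i j m :
  pred_term (fun k => gegen2_triple_value i j k) m
  = PI / 128 * IZR (triple_valueZ (Z.of_nat i) (Z.of_nat j) (Z.of_nat m - 1)).
Proof.
  destruct m as [|m]; cbn [pred_term].
  - rewrite triple_valueZ_neg by lia. simpl. ring.
  - unfold gegen2_triple_value. do 3 f_equal. lia.
Qed.

Lemma triple_value_recursion j : triple_recursion (fun i m => gegen2_triple_value i j m).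
Proof.
  intros i m.
  rewrite pred_term_triple_value_l, pred_term_triple_value_r.
  unfold gegen2_triple_value. rewrite !Nat2Z.inj_succ, <- !Z.add_1_r, !INR_IZR_INZ.
  pose proof (triple_valueZ_rec (Z.of_nat i) (Z.of_nat j) (Z.of_nat m)
                ltac:(lia) ltac:(lia) ltac:(lia)) as H.
  apply (f_equal (fun z => PI / 128 * IZR z)) in H.
  rewrite !minus_IZR, !plus_IZR, !mult_IZR, !plus_IZR in H.
  lra.
Qed.

Lemma gegen2_triple_swap i j m : gegen2_triple i j m = gegen2_triple i m j.
Proof.
  apply RInt_ext. intros x _. unfold triple_integrand.
  eq_at_R. ring.
Qed.

Lemma gegen2_triple_value_swap i j m : gegen2_triple_value i j m = gegen2_triple_value i m j.
Proof. unfold gegen2_triple_value. now rewrite triple_valueZ_swap. Qed.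

Lemma gegen2_triple_base i : gegen2_triple i 0 0 = gegen2_triple_value i 0 0.
Proof.
  unfold gegen2_triple.
  rewrite (RInt_ext _ (fun x => gegen2 i (cos x) * sin x ^ 4)), RInt_gegen2_sin4.
  2:{ intros x _. unfold triple_integrand. simpl gegen2.
      eq_at_R. ring. }
  unfold gegen2_triple_value, triple_valueZ.
  destruct i as [|i].
  - change (3 * PI / 8 = PI / 128 * IZR 48). lra.
  - destruct (triple_admissibleP (Z.of_nat (S i)) (Z.of_nat 0) (Z.of_nat 0)); [lia|].
    simpl. ring.
Qed.

Theorem gegen2_triple_closed i j m : gegen2_triple i j m = gegen2_triple_value i j m.
Proof.
  revert i m.
  apply (triple_recursion_unique _ _ (gegen2_triple_recursion j) (triple_value_recursion j)).
  intros i. rewrite gegen2_triple_swap, gegen2_triple_value_swap.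
  exact (triple_recursion_unique _ _ (gegen2_triple_recursion 0) (triple_value_recursion 0)
           gegen2_triple_base i j).
Qed.

Lemma poch_S a k : poch a (S k) = poch a k * (a + INR k).
Proof. reflexivity. Qed.

Lemma poch_add a p q : poch a (p + q) = poch a p * poch (a + INR p) q.
Proof.
  induction q as [|q IH].
  - rewrite Nat.add_0_r. simpl. ring.
  - rewrite Nat.add_succ_r, !poch_S, IH, plus_INR. ring.
Qed.

Lemma poch_pos a k : 0 < a -> 0 < poch a k.
Proof.
  intros Ha. induction k as [|k IH]; [simpl; lra|].
  rewrite poch_S. apply Rmult_lt_0_compat; [exact IH|]. pose proof (pos_INR k). lra.
Qed.

Lemma INR_fact_S k : INR (fact (S k)) = (INR k + 1) * INR (fact k).
Proof. rewrite fact_simpl, mult_INR, S_INR. reflexivity. Qed.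

(* [1 / z!], extended by [0] to negative [z]; this makes [gegen2_coef n k] vanish for [k > n]
   with no case split. *)
Definition inv_fact (z : Z) : R := if (z <? 0)%Z then 0 else / INR (fact (Z.to_nat z)).

Lemma inv_fact_of_nat n : inv_fact (Z.of_nat n) = / INR (fact n).
Proof.
  unfold inv_fact. destruct (Z.ltb_spec (Z.of_nat n) 0); [lia|]. now rewrite Nat2Z.id.
Qed.

Lemma inv_fact_succ z : IZR (z + 1) * inv_fact (z + 1) = inv_fact z.
Proof.
  unfold inv_fact.
  destruct (Z.ltb_spec (z + 1) 0), (Z.ltb_spec z 0); try lia.
  - ring.
  - replace (z + 1)%Z with 0%Z by lia. simpl. ring.
  - replace (Z.to_nat (z + 1)) with (S (Z.to_nat z)) by lia.
    assert (E : IZR (z + 1) = INR (Z.to_nat z) + 1)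
      by (rewrite INR_IZR_INZ, Z2Nat.id, plus_IZR by lia; reflexivity).
    rewrite E, INR_fact_S.
    pose proof (INR_fact_lt_0 (Z.to_nat z)). pose proof (pos_INR (Z.to_nat z)). field. lra.
Qed.

Definition gegen2_coef (n k : nat) : R :=
  poch 4 (n + k) * inv_fact (Z.of_nat n - Z.of_nat k) / (INR (fact k) * poch (5/2) k).

Definition gegen2_hyp (n : nat) (t : R) : R :=
  sum_f_R0 (fun k => gegen2_coef n k * ((t - 1) / 2) ^ k) n.

Lemma jacobiP_gegen2_hyp n t :
  jacobiP (3/2) (3/2) n t = poch (5/2) n / poch 4 n * gegen2_hyp n t.
Proof.
  unfold jacobiP, gegen2_hyp. rewrite !scal_sum. apply sum_eq. intros k Hk.
  unfold gegen2_coef, Binomial.C.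
  rewrite <- Nat2Z.inj_sub, inv_fact_of_nat by exact Hk.
  assert (E1 : poch (5/2) n = poch (5/2) k * poch (3/2 + INR k + 1) (n - k)).
  { replace n with (k + (n - k))%nat at 1 by lia. rewrite poch_add. do 2 f_equal. lra. }
  assert (E2 : poch 4 (n + k) = poch 4 n * poch (3/2 + 3/2 + INR n + 1) k).
  { rewrite poch_add. do 2 f_equal. lra. }
  rewrite E1, E2.
  pose proof (INR_fact_lt_0 n). pose proof (INR_fact_lt_0 k). pose proof (INR_fact_lt_0 (n - k)).
  pose proof (poch_pos (5/2) k ltac:(lra)). pose proof (poch_pos 4 n ltac:(lra)).
  pose proof (poch_pos (3/2 + INR k + 1) (n - k) ltac:(pose proof (pos_INR k); lra)).
  field. repeat split; lra.
Qed.

Lemma gegen2_coef_rec n k :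
  (INR n + 2) * gegen2_coef (S (S n)) k =
  2 * (INR n + 3) * (gegen2_coef (S n) k + 2 * pred_term (gegen2_coef (S n)) k)
  - (INR n + 4) * gegen2_coef n k.
Proof.
  unfold gegen2_coef. destruct k as [|k]; cbn [pred_term].
  - rewrite !Nat.add_0_r, !Z.sub_0_r, !inv_fact_of_nat, !poch_S, !INR_fact_S, !S_INR.
    pose proof (INR_fact_lt_0 n). pose proof (poch_pos 4 n ltac:(lra)). pose proof (pos_INR n).
    simpl. field. repeat split; lra.
  - set (z := (Z.of_nat n - Z.of_nat k)%Z).
    replace (Z.of_nat (S (S n)) - Z.of_nat (S k))%Z with (z + 1)%Z by lia.
    replace (Z.of_nat (S n) - Z.of_nat (S k))%Z with z by lia.
    replace (Z.of_nat (S n) - Z.of_nat k)%Z with (z + 1)%Z by lia.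
    replace (Z.of_nat n - Z.of_nat (S k))%Z with (z - 1)%Z by lia.
    rewrite <- (inv_fact_succ (z - 1)), Z.sub_add, <- (inv_fact_succ z).
    rewrite !plus_IZR.
    replace (IZR z) with (INR n - INR k)
      by (unfold z; rewrite minus_IZR, <- !INR_IZR_INZ; reflexivity).
    replace (S (S n) + S k)%nat with (S (S (S (n + k)))) by lia.
    replace (S n + S k)%nat with (S (S (n + k))) by lia.
    replace (S n + k)%nat with (S (n + k)) by lia.
    replace (n + S k)%nat with (S (n + k)) by lia.
    rewrite !poch_S, !INR_fact_S, !S_INR, !plus_INR.
    pose proof (INR_fact_lt_0 k). pose proof (poch_pos 4 (n + k) ltac:(lra)).
    pose proof (poch_pos (5/2) k ltac:(lra)). pose proof (pos_INR n). pose proof (pos_INR k).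
    field. repeat split; lra.
Qed.

Lemma gegen2_coef_high n k : (n < k)%nat -> gegen2_coef n k = 0.
Proof.
  intros Hk. unfold gegen2_coef, inv_fact.
  destruct (Z.ltb_spec (Z.of_nat n - Z.of_nat k) 0); [|lia]. unfold Rdiv. ring.
Qed.

Lemma gegen2_hyp_extend n N t : (n <= N)%nat ->
  sum_f_R0 (fun k => gegen2_coef n k * ((t - 1) / 2) ^ k) N = gegen2_hyp n t.
Proof.
  intros HN. induction N as [|N IH].
  - replace n with 0%nat by lia. reflexivity.
  - destruct (Nat.eq_dec n (S N)) as [->|Hne]; [reflexivity|].
    rewrite tech5, IH, gegen2_coef_high by lia. ring.
Qed.

Lemma gegen2_hyp_shift n t :
  (t - 1) / 2 * gegen2_hyp (S n) t =
  sum_f_R0 (fun k => pred_term (gegen2_coef (S n)) k * ((t - 1) / 2) ^ k) (S (S n)).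
Proof.
  rewrite decomp_sum by lia. cbn [pred_term Nat.pred]. unfold gegen2_hyp.
  rewrite scal_sum, Rmult_0_l, Rplus_0_l.
  apply sum_eq. intros k _. simpl pow. ring.
Qed.

Lemma gegen2_hyp_rec n t :
  (INR n + 2) * gegen2_hyp (S (S n)) t =
  2 * (INR n + 3) * t * gegen2_hyp (S n) t - (INR n + 4) * gegen2_hyp n t.
Proof.
  replace (2 * (INR n + 3) * t * gegen2_hyp (S n) t) with
    (2 * (INR n + 3) * gegen2_hyp (S n) t
     + 2 * (INR n + 3) * 2 * ((t - 1) / 2 * gegen2_hyp (S n) t)) by field.
  rewrite gegen2_hyp_shift.
  rewrite <- (gegen2_hyp_extend (S n) (S (S n))), <- (gegen2_hyp_extend n (S (S n))) by lia.
  unfold gegen2_hyp. rewrite !scal_sum, <- plus_sum, <- minus_sum.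
  apply sum_eq. intros k _.
  transitivity ((INR n + 2) * gegen2_coef (S (S n)) k * ((t - 1) / 2) ^ k); [ring|].
  rewrite gegen2_coef_rec. ring.
Qed.

Lemma gegen2_hyp_eq n t : gegen2_hyp n t = gegen2 n t.
Proof.
  enough (H : forall n, gegen2_hyp n t = gegen2 n t /\ gegen2_hyp (S n) t = gegen2 (S n) t)
    by apply H.
  clear n. induction n as [|n [IH1 IH2]].
  - unfold gegen2_hyp, gegen2_coef, inv_fact. simpl. split; field.
  - split; [exact IH2|].
    pose proof (pos_INR n).
    apply Rmult_eq_reg_l with (INR n + 2); [|lra].
    rewrite gegen2_hyp_rec, IH1, IH2, gegen2_SS. field. lra.
Qed.

Lemma jacobiP_gegen2 n t :
  jacobiP (3/2) (3/2) n t = poch (5/2) n / poch 4 n * gegen2 n t.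
Proof. now rewrite jacobiP_gegen2_hyp, gegen2_hyp_eq. Qed.

Lemma gamma_half_add2 n : gamma_half (n + 2) = 3 / 4 * sqrt PI * poch (5/2) n.
Proof.
  induction n as [|n IH]; [simpl; field|].
  replace (S n + 2)%nat with (S (n + 2)) by lia.
  cbn [gamma_half]. rewrite IH, poch_S, plus_INR. simpl INR. field.
Qed.

Lemma poch4_fact n : poch 4 n = INR (fact (n + 3)) / 6.
Proof.
  induction n as [|n IH]; [simpl; field|].
  replace (S n + 3)%nat with (S (n + 3)) by lia.
  rewrite poch_S, IH, INR_fact_S, plus_INR. simpl INR. field.
Qed.

Lemma INR_fact_add3 n :
  INR (fact (n + 3)) = INR (fact n) * (INR n + 1) * (INR n + 2) * (INR n + 3).
Proof.
  replace (n + 3)%nat with (S (S (S n))) by lia.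
  rewrite !INR_fact_S, !S_INR. ring.
Qed.

Definition eb_scale (n : nat) : R := normN n * (poch (5/2) n / poch 4 n).

Lemma eb_gegen2 n x : eb n x = eb_scale n * gegen2 n (cos x).
Proof. unfold eb, eb_scale. rewrite jacobiP_gegen2. ring. Qed.

Lemma eb_scale_pos n : 0 < eb_scale n.
Proof.
  unfold eb_scale, normN, omega. rewrite gamma_half_add2.
  pose proof (pos_INR n). pose proof (INR_fact_lt_0 n). pose proof (INR_fact_lt_0 (n + 3)).
  pose proof (poch_pos (5/2) n ltac:(lra)). pose proof (poch_pos 4 n ltac:(lra)).
  pose proof (sqrt_lt_R0 2 ltac:(lra)). pose proof (sqrt_lt_R0 PI PI_RGT_0).
  assert (0 < sqrt ((INR n + 2) * INR (fact n) * INR (fact (n + 3))))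
    by (apply sqrt_lt_R0; repeat apply Rmult_lt_0_compat; lra).
  apply Rmult_lt_0_compat; apply Rdiv_lt_0_compat; try lra.
  repeat apply Rmult_lt_0_compat; lra.
Qed.

Lemma eb_scale_sq n : eb_scale n ^ 2 = 8 / (PI * (INR n + 1) * (INR n + 3)).
Proof.
  unfold eb_scale, normN, omega. rewrite gamma_half_add2, poch4_fact, INR_fact_add3.
  pose proof (pos_INR n). pose proof (INR_fact_lt_0 n).
  pose proof (poch_pos (5/2) n ltac:(lra)). pose proof PI_RGT_0.
  unfold Rdiv. rewrite !Rpow_mult_distr, !pow_inv, !Rpow_mult_distr, !pow2_sqrt
    by first [lra | repeat apply Rmult_le_pos; lra].
  field. repeat split; lra.
Qed.

Lemma eb_scale_triple i j m :
  eb_scale i * eb_scale j * eb_scale m * (PI / 128) =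
  / (4 * sqrt (2 * PI * (INR i + 1) * (INR i + 3) * (INR j + 1) * (INR j + 3)
               * (INR m + 1) * (INR m + 3))).
Proof.
  pose proof (pos_INR i). pose proof (pos_INR j). pose proof (pos_INR m). pose proof PI_RGT_0.
  pose proof (eb_scale_pos i). pose proof (eb_scale_pos j). pose proof (eb_scale_pos m).
  assert (HD : 0 < 2 * PI * (INR i + 1) * (INR i + 3) * (INR j + 1) * (INR j + 3)
                  * (INR m + 1) * (INR m + 3)) by (repeat (apply Rmult_lt_0_compat; [|lra]); lra).
  pose proof (sqrt_lt_R0 _ HD).
  apply Rsqr_inj.
  - repeat (apply Rmult_le_pos; [|lra]); lra.
  - apply Rlt_le, Rinv_0_lt_compat. lra.
  - rewrite !Rsqr_pow2, !Rpow_mult_distr, !eb_scale_sq, pow_inv, Rpow_mult_distr, pow2_sqrt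
      by lra.
    field. repeat split; lra.
Qed.

Lemma Cbar_gegen2_triple i j m :
  Cbar i j m = eb_scale i * eb_scale j * eb_scale m * gegen2_triple i j m.
Proof.
  unfold Cbar, gegen2_triple.
  rewrite <- (is_RInt_unique _ _ _ _
                (is_RInt_scal_R _ 0 PI (eb_scale i * eb_scale j * eb_scale m)
                                (ex_RInt_triple_integrand i j m 0 PI))).
  apply RInt_ext. intros x _. unfold triple_integrand. rewrite !eb_gegen2.
  eq_at_R. ring.
Qed.

Lemma indic_andb a b : indic (a && b) = indic a * indic b.
Proof. destruct a, b; simpl; ring. Qed.

Lemma indicators_triple_admissible (x : R) (i j m : Z) :
  x * indic ((Z.abs (j - m) <=? i)%Z && (i <=? j + m)%Z)
    * indic ((Z.abs (i - m) <=? j)%Z && (j <=? i + m)%Z)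
    * indic ((Z.abs (i - j) <=? m)%Z && (m <=? i + j)%Z)
    * indic (even_nonneg (j + m - i)) * indic (even_nonneg (i + m - j))
    * indic (even_nonneg (i + j - m))
  = x * indic (triple_admissible i j m).
Proof.
  rewrite !Rmult_assoc, <- !indic_andb. do 2 f_equal.
  apply eq_true_iff_eq. unfold even_nonneg.
  rewrite !andb_true_iff, !Z.leb_le, !Zeven_mod, !Z.eqb_eq.
  rewrite <- Bool.reflect_iff by apply triple_admissibleP.
  split; intros; Z.div_mod_to_equations; lia.
Qed.

Theorem lemma5p8 (i j m : nat) :
  let zi := Z.of_nat i in let zj := Z.of_nat j in let zm := Z.of_nat m in
  Cbar i j m =
    IZR (zi + zj - zm + 2) * IZR (zi - zj + zm + 2) * IZR (- zi + zj + zm + 2)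
      * IZR (zi + zj + zm + 6)
    / (4 * sqrt (2 * PI * (INR i + 1) * (INR i + 3) * (INR j + 1) * (INR j + 3)
                  * (INR m + 1) * (INR m + 3)))
    * indic (andb (Z.abs (zj - zm) <=? zi)%Z (zi <=? zj + zm)%Z)
    * indic (andb (Z.abs (zi - zm) <=? zj)%Z (zj <=? zi + zm)%Z)
    * indic (andb (Z.abs (zi - zj) <=? zm)%Z (zm <=? zi + zj)%Z)
    * indic (even_nonneg (zj + zm - zi))
    * indic (even_nonneg (zi + zm - zj))
    * indic (even_nonneg (zi + zj - zm)).
Proof.
  cbv zeta.
  rewrite indicators_triple_admissible, Cbar_gegen2_triple, gegen2_triple_closed.
  unfold Rdiv at 1. rewrite <- eb_scale_triple.
  unfold gegen2_triple_value, triple_valueZ, triple_poly, indic.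
  destruct triple_admissible; rewrite ?mult_IZR; ring.
Qed.
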